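(* Let $\kappa$ be a cardinal (finite or infinite), let $\mathbb{F}$ be a field, and let $V$ be the vector space over $\mathbb{F}$ presented by generators $x_\alpha, y_\alpha, z_\alpha$ ($\alpha\in\kappa$) subject to the relations $x_\alpha+y_\alpha+z_\alpha=0$ ($\alpha\in\kappa$). Define $F\colon \mathcal{P}(\kappa)^3\to \mathrm{Sub}(V)$ by $F(A,B,C)=\mathrm{Span}\{x_\alpha:\alpha\in A\}+\mathrm{Span}\{y_\beta:\beta\in B\}+\mathrm{Span}\{z_\gamma:\gamma\in C\}$. Then the restriction of $F$ to $M_3[\mathcal{P}(\kappa)]$ is a bounded lattice embedding $M_3[\mathcal{P}(\kappa)]\to\mathrm{Sub}(V)$. Consequently, when $\kappa$ is infinite, the restriction of $F$ to the lattice $S$ is a bounded lattice embedding $S\to \mathrm{Sub}(V)$; in particular $S$ is isomorphic to a bounded sublattice of the lattice of all subspaces of a vector space.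
   Context: $\mathcal{P}(\kappa)$ is the Boolean lattice of all subsets of $\kappa$ and $\mathrm{Sub}(V)$ is the lattice of all subspaces of $V$ (join is the sum of subspaces, meet is intersection). For a distributive lattice $L$, a triple $(a,b,c)\in L^3$ is balanced if $a\wedge b=a\wedge c=b\wedge c$; $M_3[L]$ denotes the set of balanced triples, which is a lattice with componentwise meet and with join $(a,b,c)\vee(a',b',c')=\overline{(a\vee a',b\vee b',c\vee c')}$, where for $(a,b,c)\in L^3$ one sets $\mu(a,b,c)=(a\wedge b)\vee(a\wedge c)\vee(b\wedge c)$ and $\overline{(a,b,c)}=(a\vee\mu(a,b,c),\,b\vee\mu(a,b,c),\,c\vee\mu(a,b,c))$. For infinite $\kappa$: $\mathcal{F}(\kappa)$ is the set of subsets $X\subseteq\kappa$ that are finite or have finite complement $\kappa\setminus X$ (a Boolean sublattice of $\mathcal{P}(\kappa)$); $T=\{(A,B,C)\in\mathcal{F}(\kappa)^3 : C\setminus \mu(A,B,C)\text{ is finite}\}$, where $\mu(A,B,C)=(A\cap B)\cup(A\cap C)\cup(B\cap C)$; and $S=T\cap M_3[\mathcal{F}(\kappa)]$, ordered componentwise (a bounded sublattice of $M_3[\mathcal{F}(\kappa)]$, itself a sublattice of $M_3[\mathcal{P}(\kappa)]$). *)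

From HB Require Import structures.
From mathcomp Require Import all_boot all_order all_algebra.
From mathcomp Require Import boolp classical_sets cardinality.
Set Implicit Arguments. Unset Strict Implicit. Unset Printing Implicit Defensive.
Import GRing.Theory.
Local Open Scope ring_scope.
Local Open Scope classical_set_scope.

Section Subspaces.
Variables (F : fieldType) (V : lmodType F).

Definition subspace (U : set V) : Prop :=
  U 0 /\ (forall u v, U u -> U v -> U (u + v)) /\ (forall (a : F) u, U u -> U (a *: u)).

Definition span (S : set V) : set V :=
  [set v | forall U : set V, subspace U -> S `<=` U -> U v].

Definition ssum (U W : set V) : set V :=
  [set v | exists u w, U u /\ W w /\ v = u + w].
End Subspaces.

(* (V, x, y, z) is the F-vector space presented by generators x_a, y_a, z_a
   (a in K) subject to the relations x_a + y_a + z_a = 0: the generators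
   satisfy the relations, span V, and the universal property holds. *)
Definition presentation (K : Type) (F : fieldType) (V : lmodType F)
    (x y z : K -> V) : Prop :=
  (forall a, x a + y a + z a = 0) /\
  span (range x `|` range y `|` range z) = setT /\
  (forall (W : lmodType F) (x' y' z' : K -> W),
      (forall a, x' a + y' a + z' a = 0) ->
      exists f : V -> W,
        (forall u v, f (u + v) = f u + f v) /\
        (forall (c : F) u, f (c *: u) = c *: f u) /\
        (forall a, f (x a) = x' a /\ f (y a) = y' a /\ f (z a) = z' a)).

Section Triples.
Variable K : Type.

Definition triple := (set K * set K * set K)%type.
Definition tA (t : triple) : set K := t.1.1.
Definition tB (t : triple) : set K := t.1.2.
Definition tC (t : triple) : set K := t.2.

Definition mu (A B C : set K) : set K := (A `&` B) `|` (A `&` C) `|` (B `&` C).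

(* balanced triples: elements of M_3[P(K)] *)
Definition balanced (t : triple) : Prop :=
  tA t `&` tB t = tA t `&` tC t /\ tA t `&` tC t = tB t `&` tC t.

Definition tbot : triple := (set0, set0, set0).
Definition ttop : triple := (setT, setT, setT).

Definition tmeet (t s : triple) : triple :=
  (tA t `&` tA s, tB t `&` tB s, tC t `&` tC s).

Definition closure (t : triple) : triple :=
  let m := mu (tA t) (tB t) (tC t) in (tA t `|` m, tB t `|` m, tC t `|` m).

Definition tjoin (t s : triple) : triple :=
  closure (tA t `|` tA s, tB t `|` tB s, tC t `|` tC s).

Definition fincofin (X : set K) : Prop := finite_set X \/ finite_set (~` X).

(* membership in S = T ∩ M_3[F(K)] *)
Definition inS (t : triple) : Prop :=
  fincofin (tA t) /\ fincofin (tB t) /\ fincofin (tC t) /\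
  finite_set (tC t `\` mu (tA t) (tB t) (tC t)) /\ balanced t.
End Triples.

Definition Fmap (K : Type) (F : fieldType) (V : lmodType F) (x y z : K -> V)
    (t : triple K) : set V :=
  ssum (ssum (span (x @` tA t)) (span (y @` tB t))) (span (z @` tC t)).

Definition bounded_embedding_on (K : Type) (F : fieldType) (V : lmodType F)
    (P : triple K -> Prop) (f : triple K -> set V) : Prop :=
  f (tbot K) = [set 0] /\ f (ttop K) = setT /\
  (forall t s, P t -> P s -> f t = f s -> t = s) /\
  (forall t s, P t -> P s ->
     f (tmeet t s) = f t `&` f s /\ f (tjoin t s) = ssum (f t) (f s)).

(* V is the direct sum over b of the planes V_b spanned by x b, y b, z b, and
   F(A,B,C) is the sum over b of the subspaces of V_b spanned by the generators
   indexed by b.  In V_b the lines through x b, y b, z b pairwise meet in 0 and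
   any two of them span V_b, so the balanced patterns (no letter, one letter,
   all three) give a copy of M_3 in Sub(V_b).  Joins are preserved for all
   triples since any two of x b, y b, z b generate the third; meets and
   injectivity are read off coordinatewise through linear forms provided by the
   universal property.  The one non-formal step is that a vector whose
   coordinates are compatible with a triple t lies in F(t): it lies in the span
   of finitely many V_b, which are split off one at a time. *)

From Pilot Require Import Defs.
From HB Require Import structures.
From mathcomp Require Import all_boot all_order all_algebra.
From mathcomp Require Import boolp classical_sets cardinality.
From Stdlib Require List.
Set Implicit Arguments. Unset Strict Implicit. Unset Printing Implicit Defensive.
Import GRing.Theory.
Local Open Scope ring_scope.
Local Open Scope classical_set_scope.

Section Subspaces.
Variables (F : fieldType) (V : lmodType F).
Implicit Types (S T U W : set V) (u v w : V).

Lemma subspace0 : subspace [set (0 : V)].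
Proof.
split=> //; split; first by move=> u v -> ->; rewrite addr0.
by move=> a u ->; rewrite scaler0.
Qed.

Section Closure.
Variables (U : set V) (sU : subspace U).

Lemma subspace_mem0 : U 0.
Proof. by case: sU. Qed.

Lemma subspaceD u v : U u -> U v -> U (u + v).
Proof. by case: sU => _ [addU _]; apply: addU. Qed.

Lemma subspaceZ (a : F) u : U u -> U (a *: u).
Proof. by case: sU => _ [_ scaleU]; apply: scaleU. Qed.

Lemma subspaceN u : U u -> U (- u).
Proof. by rewrite -scaleN1r; apply: subspaceZ. Qed.

Lemma subspace_third u v w : u + v + w = 0 -> U v -> U w -> U u.
Proof.
move=> /eqP; rewrite -addrA addr_eq0 => /eqP -> Uv Uw.
by apply: subspaceN; apply: subspaceD.
Qed.

Lemma subspace_comb (a b : F) u v :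
  U u \/ a = 0 -> U v \/ b = 0 -> U (a *: u + b *: v).
Proof.
have Z c w : U w \/ c = 0 -> U (c *: w).
  by case=> [Uw|->]; [apply: subspaceZ|rewrite scale0r; apply: subspace_mem0].
by move=> /Z Uu /Z Uv; apply: subspaceD.
Qed.

End Closure.

Lemma subset_span S : S `<=` Defs.span S.
Proof. by move=> v Sv U _; apply. Qed.

Lemma span_minimal S U : subspace U -> S `<=` U -> Defs.span S `<=` U.
Proof. by move=> sU SU v; apply. Qed.

Lemma subspace_span S : subspace (Defs.span S).
Proof.
split; first by move=> U [].
split; first by move=> u v Su Sv U sU SU; apply: subspaceD (Su _ sU SU) (Sv _ sU SU).
by move=> a u Su U sU SU; apply: subspaceZ (Su _ sU SU).
Qed.

Lemma span_mono S T : S `<=` T -> Defs.span S `<=` Defs.span T.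
Proof.
move=> ST; apply: span_minimal; first exact: subspace_span.
by move=> v /ST; apply: subset_span.
Qed.

Lemma span_set0 : Defs.span (set0 : set V) = [set 0].
Proof.
apply/seteqP; split; first exact: span_minimal subspace0 (sub0set _).
by move=> _ ->; apply: subspace_mem0 (subspace_span _).
Qed.

Lemma subspace_ssum U W : subspace U -> subspace W -> subspace (ssum U W).
Proof.
move=> sU sW; split.
  exists 0, 0; rewrite addr0.
  by split; [apply: subspace_mem0|split; [apply: subspace_mem0|]].
split.
  move=> _ _ [u1 [w1 [U1 [W1 ->]]]] [u2 [w2 [U2 [W2 ->]]]].
  exists (u1 + u2), (w1 + w2); rewrite addrACA.
  by split; [apply: subspaceD|split; [apply: subspaceD|]].
move=> a _ [u [w [Uu [Ww ->]]]]; exists (a *: u), (a *: w).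
by rewrite scalerDr; split; [apply: subspaceZ|split; [apply: subspaceZ|]].
Qed.

Lemma ssum_minimal U W X : subspace X -> U `<=` X -> W `<=` X -> ssum U W `<=` X.
Proof.
by move=> sX UX WX _ [u [w [Uu [Ww ->]]]]; apply: subspaceD; [|apply: UX|apply: WX].
Qed.

Lemma span_setU S T : Defs.span (S `|` T) = ssum (Defs.span S) (Defs.span T).
Proof.
have [sS sT] := (subspace_span S, subspace_span T).
apply/seteqP; split.
  apply: span_minimal; first exact: subspace_ssum.
  move=> v [Sv|Tv].
    exists v, 0; rewrite addr0.
    by split; [apply: subset_span|split; [apply: subspace_mem0|]].
  exists 0, v; rewrite add0r.
  by split; [apply: subspace_mem0|split; [apply: subset_span|]].
apply: ssum_minimal; first exact: subspace_span.
  by apply: span_mono; apply: subsetUl.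
by apply: span_mono; apply: subsetUr.
Qed.

End Subspaces.

Definition lin_map (F : fieldType) (V W : lmodType F) (f : V -> W) : Prop :=
  (forall u v, f (u + v) = f u + f v) /\ (forall (c : F) u, f (c *: u) = c *: f u).

Section LinearMaps.
Variables (F : fieldType) (V W : lmodType F) (f : V -> W) (lf : lin_map f).

Lemma lin_map0 : f 0 = 0.
Proof. by rewrite -(scale0r 0) lf.2 scale0r. Qed.

Lemma lin_mapB u v : f (u - v) = f u - f v.
Proof. by rewrite -scaleN1r lf.1 lf.2 scaleN1r. Qed.

Lemma subspace_preimage (U : set W) : subspace U -> subspace (f @^-1` U).
Proof.
move=> sU; split; first by rewrite /preimage /= lin_map0; apply: subspace_mem0.
split; first by move=> u v; rewrite /preimage /= lf.1 => Uu Uv; exact: (subspaceD sU Uu Uv).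
by move=> a u; rewrite /preimage /= lf.2 => Uu; exact: (subspaceZ sU a Uu).
Qed.

End LinearMaps.

Definition two_imply_third (A B C : Prop) : Prop :=
  (A /\ B -> C) /\ (A /\ C -> B) /\ (B /\ C -> A).

Lemma balancedP (K : Type) (t : triple K) b :
  balanced t -> two_imply_third (tA t b) (tB t b) (tC t b).
Proof.
move=> [eAB eAC]; split; [|split] => h.
- by have : (tA t `&` tB t) b by []; rewrite eAB => -[].
- by have : (tA t `&` tC t) b by []; rewrite -eAB => -[].
- by have : (tB t `&` tC t) b by []; rewrite -eAC -eAB => -[].
Qed.

Definition delta {K : Type} {F : fieldType} (a b : K) : F :=
  if pselect (a = b) then 1 else 0.

Lemma deltaxx (K : Type) (F : fieldType) (a : K) : delta a a = 1 :> F.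
Proof. by rewrite /delta; case: pselect. Qed.

Lemma delta_neq (K : Type) (F : fieldType) (a b : K) : a <> b -> delta a b = 0 :> F.
Proof. by rewrite /delta; case: pselect. Qed.

Lemma deltaZ (K : Type) (F : fieldType) (W : lmodType F) (f : K -> W) (a b : K) :
  delta a b *: f a = delta a b *: f b.
Proof. by have [->|ab] := pselect (a = b); last by rewrite delta_neq // !scale0r. Qed.

Section PresentedSpace.
Variables (K : Type) (F : fieldType) (V : lmodType F) (x y z : K -> V).
Hypothesis xyz0 : forall a, x a + y a + z a = 0.

Definition gens3 (A B C : set K) : set V := x @` A `|` y @` B `|` z @` C.

Local Notation Fm := (Fmap x y z).

Lemma Fmap_spanE t : Fm t = Defs.span (gens3 (tA t) (tB t) (tC t)).
Proof. by rewrite /Fmap -!span_setU. Qed.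

Lemma subspace_Fmap t : subspace (Fm t).
Proof. by rewrite Fmap_spanE; apply: subspace_span. Qed.

Lemma Fmap_mono t s :
  tA t `<=` tA s -> tB t `<=` tB s -> tC t `<=` tC s -> Fm t `<=` Fm s.
Proof.
move=> sA sB sC; rewrite !Fmap_spanE; apply: span_mono.
by move=> _ [[[a /sA Aa <-]|[a /sB Ba <-]]|[a /sC Ca <-]]; [left; left|left; right|right];
  exists a.
Qed.

Lemma mem_Fmap_x t a : tA t a \/ (tB t a /\ tC t a) -> Fm t (x a).
Proof.
rewrite Fmap_spanE; case=> [Aa|[Ba Ca]]; first by apply: subset_span; left; left; exists a.
by apply: (subspace_third (subspace_span _) (xyz0 a)); apply: subset_span;
  [left; right|right]; exists a.
Qed.

Lemma mem_Fmap_y t a : tB t a \/ (tA t a /\ tC t a) -> Fm t (y a).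
Proof.
rewrite Fmap_spanE; case=> [Ba|[Aa Ca]]; first by apply: subset_span; left; right; exists a.
have yxz0 : y a + x a + z a = 0 by rewrite (addrC (y a)) xyz0.
by apply: (subspace_third (subspace_span _) yxz0); apply: subset_span;
  [left; left|right]; exists a.
Qed.

Lemma mem_Fmap_z t a : tC t a \/ (tA t a /\ tB t a) -> Fm t (z a).
Proof.
rewrite Fmap_spanE; case=> [Ca|[Aa Ba]]; first by apply: subset_span; right; exists a.
have zxy0 : z a + x a + y a = 0 by rewrite -addrA addrC xyz0.
by apply: (subspace_third (subspace_span _) zxy0); apply: subset_span;
  [left; left|left; right]; exists a.
Qed.

Lemma Fmap_closure u : Fm (Defs.closure u) = Fm u.
Proof.
apply/seteqP; split; last by apply: Fmap_mono; apply: subsetUl.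
rewrite [Fm (Defs.closure u)]Fmap_spanE; apply: span_minimal (subspace_Fmap u) _.
move=> _ [[[a Ha <-]|[a Ha <-]]|[a Ha <-]];
  [apply: mem_Fmap_x|apply: mem_Fmap_y|apply: mem_Fmap_z];
  by case: Ha => [|[[[]|[]]|[]]]; tauto.
Qed.

Lemma Fmap_tjoin t s : Fm (tjoin t s) = ssum (Fm t) (Fm s).
Proof.
rewrite Fmap_closure !Fmap_spanE -span_setU; congr Defs.span.
rewrite /gens3 /= !image_setU; apply/seteqP; split=> v /=; tauto.
Qed.

Hypothesis span_gensT : Defs.span (range x `|` range y `|` range z) = setT.

Lemma Fmap_tbot : Fm (tbot K) = [set 0].
Proof. by rewrite Fmap_spanE /gens3 /= !image_set0 !setU0 span_set0. Qed.

Lemma Fmap_ttop : Fm (ttop K) = setT.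
Proof. by rewrite Fmap_spanE. Qed.

Variables cx cy : K -> V -> F^o.
Hypotheses (cx_lin : forall b, lin_map (cx b)) (cy_lin : forall b, lin_map (cy b)).
Hypotheses (cx_x : forall b a, cx b (x a) = delta b a) (cx_y : forall b a, cx b (y a) = 0)
  (cx_z : forall b a, cx b (z a) = - delta b a).
Hypotheses (cy_x : forall b a, cy b (x a) = 0) (cy_y : forall b a, cy b (y a) = delta b a)
  (cy_z : forall b a, cy b (z a) = - delta b a).

(* [local_mem A B C p q]: the point (p, q) of F^2 lies in the span of those of
   (1, 0), (0, 1), (-1, -1) selected by A, B, C; these are the coordinates of
   x b, y b, z b in the b-th summand of V. *)
Definition local_mem (A B C : Prop) (p q : F) : Prop :=
  (~ B /\ ~ C -> q = 0) /\ (~ A /\ ~ C -> p = 0) /\ (~ A /\ ~ B -> p = q).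

Lemma local_mem0 A B C : local_mem A B C 0 0.
Proof. by []. Qed.

Lemma local_memD A B C p q p' q' :
  local_mem A B C p q -> local_mem A B C p' q' -> local_mem A B C (p + p') (q + q').
Proof.
move=> [h1 [h2 h3]] [h1' [h2' h3']]; split; [|split] => h.
- by rewrite h1 // h1' // addr0.
- by rewrite h2 // h2' // addr0.
- by rewrite h3 // h3'.
Qed.

Lemma local_memZ A B C (c : F) p q : local_mem A B C p q -> local_mem A B C (c * p) (c * q).
Proof.
move=> [h1 [h2 h3]]; split; [|split] => h.
- by rewrite h1 // mulr0.
- by rewrite h2 // mulr0.
- by rewrite h3.
Qed.

Lemma local_mem_meet A B C A' B' C' p q :
  two_imply_third A B C -> two_imply_third A' B' C' ->
  local_mem A B C p q -> local_mem A' B' C' p q ->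
  local_mem (A /\ A') (B /\ B') (C /\ C') p q.
Proof.
(* any two of the three lines of F^2 meet only in 0 *)
have pq0 : q = 0 -> p = 0 -> p = q by move=> -> ->.
have q0 : p = 0 -> p = q -> q = 0 by move=> -> <-.
have p0 : q = 0 -> p = q -> p = 0 by move=> -> ->.
rewrite /two_imply_third /local_mem.
move: (EM A) (EM B) (EM C) (EM A') (EM B') (EM C'); tauto.
Qed.

Definition coord_mem (t : triple K) : set V :=
  [set v | forall b, local_mem (tA t b) (tB t b) (tC t b) (cx b v) (cy b v)].

Lemma subspace_coord_mem t : subspace (coord_mem t).
Proof.
split; first by move=> b; rewrite !lin_map0.
split; first by move=> u v tu tv b; rewrite (cx_lin b).1 (cy_lin b).1; apply: local_memD.
by move=> c u tu b; rewrite (cx_lin b).2 (cy_lin b).2; apply: local_memZ.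
Qed.

Lemma Fmap_coord_mem t : Fm t `<=` coord_mem t.
Proof.
rewrite Fmap_spanE; apply: span_minimal (subspace_coord_mem t) _.
move=> _ [[[a Ha <-]|[a Ha <-]]|[a Ha <-]] b /=;
  rewrite ?(cx_x, cx_y, cx_z, cy_x, cy_y, cy_z);
  (have [->|ba] := pselect (b = a); last by rewrite delta_neq // ?oppr0);
  by rewrite deltaxx /local_mem; intuition.
Qed.

Definition component (a : K) (v : V) : V := cx a v *: x a + cy a v *: y a.

Lemma lin_map_component a : lin_map (component a).
Proof.
split=> [u v|c u]; rewrite /component.
  by rewrite (cx_lin a).1 (cy_lin a).1 !scalerDl addrACA.
by rewrite (cx_lin a).2 (cy_lin a).2 -!scalerA -scalerDr.
Qed.

Lemma component_x a b : component a (x b) = delta a b *: x b.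
Proof. by rewrite /component cx_x cy_x scale0r addr0 deltaZ. Qed.

Lemma component_y a b : component a (y b) = delta a b *: y b.
Proof. by rewrite /component cx_y cy_y scale0r add0r deltaZ. Qed.

Lemma component_z a b : component a (z b) = delta a b *: z b.
Proof.
have zN c : z c = - (x c + y c) by apply/eqP; rewrite -addr_eq0 addrC xyz0.
by rewrite /component cx_z cy_z !scaleNr -opprD -scalerDr -scalerN -zN deltaZ.
Qed.

Lemma cx_component a b v : cx b (component a v) = cx a v * delta b a.
Proof. by rewrite /component (cx_lin b).1 !(cx_lin b).2 cx_x cx_y scaler0 addr0. Qed.

Lemma cy_component a b v : cy b (component a v) = cy a v * delta b a.
Proof. by rewrite /component (cy_lin b).1 !(cy_lin b).2 cy_x cy_y scaler0 add0r. Qed.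

Lemma coord_mem_sub_component t a v :
  coord_mem t v -> coord_mem t (v - component a v).
Proof.
move=> tv b; rewrite /= !lin_mapB // cx_component cy_component.
have [->|ba] := pselect (b = a); first by rewrite deltaxx !mulr1 !subrr.
by rewrite delta_neq // !mulr0 !subr0; apply: tv.
Qed.

Lemma component_Fmap t a v : coord_mem t v -> Fm t (component a v).
Proof.
move=> /(_ a) [qx0 [py0 pqz]]; have sF := subspace_Fmap t; rewrite /component.
have [Ca|nC] := EM (tC t a); last first.
  apply: (subspace_comb sF).
    have [Aa|nA] := EM (tA t a); last by right; apply: py0.
    by left; apply: mem_Fmap_x; left.
  have [Ba|nB] := EM (tB t a); last by right; apply: qx0.
  by left; apply: mem_Fmap_y; left.
have [Aa|nA] := EM (tA t a).
  by apply: (subspace_comb sF); left; [apply: mem_Fmap_x; left|apply: mem_Fmap_y; right].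
have [Ba|nB] := EM (tB t a).
  by apply: (subspace_comb sF); left; [apply: mem_Fmap_x; right|apply: mem_Fmap_y; left].
have xyN : x a + y a = - z a by apply/eqP; rewrite -addr_eq0 xyz0.
rewrite pqz // -scalerDr xyN scalerN; apply: (subspaceN sF); apply: (subspaceZ sF).
by apply: mem_Fmap_z; left.
Qed.

Definition gens (s : seq K) : set V :=
  let S := [set b | List.In b s] in gens3 S S S.

Lemma span_gens_nil : Defs.span (gens [::]) `<=` [set 0].
Proof. by apply: (span_minimal (subspace0 V)) => _ [[[? []]|[? []]]|[? []]]. Qed.

Lemma span_gens_cons a s v :
  Defs.span (gens (a :: s)) v -> Defs.span (gens s) (v - component a v).
Proof.
have lin_sub : lin_map (fun v => v - component a v).
  have [cD cZ] := lin_map_component a.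
  by split=> [u w|c u]; [rewrite cD opprD addrACA|rewrite cZ scalerBr].
move=> Hv; apply: (span_minimal (subspace_preimage lin_sub (subspace_span _)) _ Hv).
have key g b : List.In b (a :: s) -> component a g = delta a b *: g ->
    (List.In b s -> gens s g) -> Defs.span (gens s) (g - component a g).
  move=> /= Hb -> gs; have [ab|ab] := pselect (a = b).
    by rewrite ab deltaxx scale1r subrr; apply: subspace_mem0 (subspace_span _).
  rewrite delta_neq // scale0r subr0; apply: subset_span; apply: gs.
  by case: Hb.
move=> _ [[[b Hb <-]|[b Hb <-]]|[b Hb <-]]; rewrite /preimage /=.
- by apply: key Hb (component_x a b) _ => ?; left; left; exists b.
- by apply: key Hb (component_y a b) _ => ?; left; right; exists b.
- by apply: key Hb (component_z a b) _ => ?; right; exists b.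
Qed.

Lemma span_gens_exists v : exists s, Defs.span (gens s) v.
Proof.
pose U := [set v | exists s, Defs.span (gens s) v].
have gens_app s1 s2 : Defs.span (gens s1) `<=` Defs.span (gens (s1 ++ s2)) /\
    Defs.span (gens s2) `<=` Defs.span (gens (s1 ++ s2)).
  split; apply: span_mono => _ [[[b Hb <-]|[b Hb <-]]|[b Hb <-]];
    [left; left|left; right|right|left; left|left; right|right]; exists b => //;
    by apply: List.in_or_app; auto.
have sU : subspace U.
  split; first by exists [::]; apply: subspace_mem0 (subspace_span _).
  split; last by move=> c u [s su]; exists s; exact: (subspaceZ (subspace_span _) c su).
  move=> u w [s1 su] [s2 sw]; exists (s1 ++ s2).
  apply: (subspaceD (subspace_span _)); first exact: (gens_app s1 s2).1 _ su.
  exact: (gens_app s1 s2).2 _ sw.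
have : setT v by [].
rewrite -span_gensT; apply: (span_minimal sU).
by move=> _ [[[b _ <-]|[b _ <-]]|[b _ <-]]; exists [:: b]; apply: subset_span;
  [left; left|left; right|right]; exists b => /=; auto.
Qed.

Lemma coord_mem_Fmap t v : coord_mem t v -> Fm t v.
Proof.
have [s] := span_gens_exists v; elim: s v => [|a s IH] v sv tv.
  by rewrite (span_gens_nil sv); apply: subspace_mem0 (subspace_Fmap t).
rewrite -(subrK (component a v) v); apply: (subspaceD (subspace_Fmap t)).
  by apply: IH; [apply: span_gens_cons|apply: coord_mem_sub_component].
exact: component_Fmap.
Qed.

Lemma FmapP t v : Fm t v <-> coord_mem t v.
Proof. by split; [apply: Fmap_coord_mem|apply: coord_mem_Fmap]. Qed.

Lemma Fmap_tmeet t s : balanced t -> balanced s -> Fm (tmeet t s) = Fm t `&` Fm s.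
Proof.
move=> bt bs; apply/seteqP; split=> [v tsv|v [/FmapP tv /FmapP sv]].
  by split; apply: Fmap_mono tsv => a [].
by apply/FmapP => b; apply: local_mem_meet (balancedP b bt) (balancedP b bs) (tv b) (sv b).
Qed.

Lemma one_neq0 : (1 : F) <> 0.
Proof. exact/eqP/oner_neq0. Qed.

Lemma Fmap_x_balanced t a : balanced t -> Fm t (x a) -> tA t a.
Proof.
move=> bt /FmapP /(_ a); rewrite cx_x cy_x deltaxx => -[_ [p0 pq]].
have [_ [_ BCA]] := balancedP a bt; have [//|nA] := EM (tA t a).
by apply: BCA; split; apply: contrapT => ?; apply: one_neq0; [apply: pq|apply: p0].
Qed.

Lemma Fmap_y_balanced t a : balanced t -> Fm t (y a) -> tB t a.
Proof.
move=> bt /FmapP /(_ a); rewrite cx_y cy_y deltaxx => -[q0 [_ pq]].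
have [_ [ACB _]] := balancedP a bt; have [//|nB] := EM (tB t a).
by apply: ACB; split; apply: contrapT => ?; apply: one_neq0; [symmetry; apply: pq|apply: q0].
Qed.

Lemma Fmap_z_balanced t a : balanced t -> Fm t (z a) -> tC t a.
Proof.
move=> bt /FmapP /(_ a); rewrite cx_z cy_z deltaxx => -[q0 [p0 _]].
have [ABC _] := balancedP a bt; have [//|nC] := EM (tC t a).
by apply: ABC; split; apply: contrapT => ?; apply: one_neq0; apply/eqP;
  rewrite -oppr_eq0; apply/eqP; [apply: p0|apply: q0].
Qed.

Lemma Fmap_subset t s : balanced s -> Fm t `<=` Fm s ->
  tA t `<=` tA s /\ tB t `<=` tB s /\ tC t `<=` tC s.
Proof.
move=> bs ts; split; [|split] => a ta.
- by apply: Fmap_x_balanced bs (ts _ _); apply: mem_Fmap_x; left.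
- by apply: Fmap_y_balanced bs (ts _ _); apply: mem_Fmap_y; left.
- by apply: Fmap_z_balanced bs (ts _ _); apply: mem_Fmap_z; left.
Qed.

Lemma Fmap_inj t s : balanced t -> balanced s -> Fm t = Fm s -> t = s.
Proof.
move=> bt bs ts.
have [sA [sB sC]] : tA t `<=` tA s /\ tB t `<=` tB s /\ tC t `<=` tC s.
  by apply: (Fmap_subset bs); rewrite ts.
have [sA' [sB' sC']] : tA s `<=` tA t /\ tB s `<=` tB t /\ tC s `<=` tC t.
  by apply: (Fmap_subset bt); rewrite ts.
case: t s {bt bs ts} sA sB sC sA' sB' sC' => [[A B] C] [[A' B'] C'] /= *.
by congr (_, _, _); apply/seteqP.
Qed.

Lemma Fmap_bounded_embedding : bounded_embedding_on (@balanced K) Fm.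
Proof.
split; first exact: Fmap_tbot.
split; first exact: Fmap_ttop.
split; first exact: Fmap_inj.
by move=> t s bt bs; split; [apply: Fmap_tmeet|apply: Fmap_tjoin].
Qed.

End PresentedSpace.

Lemma bounded_embedding_on_sub (K : Type) (F : fieldType) (V : lmodType F)
    (P Q : triple K -> Prop) (f : triple K -> set V) :
  (forall t, Q t -> P t) -> bounded_embedding_on P f -> bounded_embedding_on Q f.
Proof.
move=> QP [f0 [f1 [inj hom]]]; split=> //; split=> //.
by split=> t s /QP Pt /QP Ps; [apply: inj|apply: hom].
Qed.

Lemma presentation_functional (K : Type) (F : fieldType) (V : lmodType F)
    (x y z : K -> V) (p q r : K -> K -> F) :
  presentation x y z -> (forall b a, p b a + q b a + r b a = 0) ->
  exists f : K -> V -> F^o, (forall b, lin_map (f b)) /\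
    (forall b a, f b (x a) = p b a) /\ (forall b a, f b (y a) = q b a) /\
    (forall b a, f b (z a) = r b a).
Proof.
move=> [_ [_ univ]] pqr0.
have [f hf] := choice (fun b => univ F^o (p b) (q b) (r b) (pqr0 b)).
exists f; split; first by move=> b; have [fD [fZ _]] := hf b.
by split; [|split] => b a; have [_ [_ /(_ a) [? [? ?]]]] := hf b.
Qed.

Theorem theorem6p4 (K : Type) (F : fieldType) (V : lmodType F) (x y z : K -> V) :
  presentation x y z ->
  bounded_embedding_on (@balanced K) (Fmap x y z) /\
  (~ finite_set [set: K] -> bounded_embedding_on (@inS K) (Fmap x y z)).
Proof.
move=> pres; have [xyz0 [span_gensT _]] := pres.
have rel_x (b a : K) : delta b a + 0 + - delta b a = 0 :> F by rewrite addr0 subrr.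
have rel_y (b a : K) : 0 + delta b a + - delta b a = 0 :> F by rewrite add0r subrr.
have [cx [cx_lin [cx_x [cx_y cx_z]]]] := presentation_functional pres rel_x.
have [cy [cy_lin [cy_x [cy_y cy_z]]]] := presentation_functional pres rel_y.
have emb :=
  Fmap_bounded_embedding xyz0 span_gensT cx_lin cy_lin cx_x cx_y cx_z cy_x cy_y cy_z.
split=> // _; apply: bounded_embedding_on_sub emb.
by move=> t [_ [_ [_ [_ bt]]]].
Qed.
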